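(* Let $U$, $x_i$, $x_{i+1/2}$, $h$, $\tilde h_R,\tilde h_L$ be as in the context, let $W_i:=\min_{j=1,\dots,k}(\tilde h_R(x_i;x_{j+1})+\tilde h_L(x_i;x_j))$ and $W(x)=\min_{j=1,\dots,k}\{W_j+h(x;x_j)\}$. Then for all $x\in\mathbb{S}^1$, $$W(x)=\min_{i=1,\dots,k}\min\{W_i+h(x;x_i),\ W(x_{i+1/2})+h(x;x_{i+1/2})\}.$$
   Context: $\mathbb{S}^1=\mathbb{R}/\mathbb{Z}$; $U:\mathbb{R}\to\mathbb{R}$ smooth, skew periodic ($U(x)=\tilde U(x)-\bar bx$, $\tilde U$ smooth 1-periodic), whose critical points in one period are exactly $k\ge1$ local minima $x_1,\dots,x_k$ interleaved with $k$ local maxima, $0=x_{1/2}<x_1<x_{3/2}<\dots<x_k<x_{k+1/2}=1$, $x_{i+\ell k}=x_i+\ell$. $L(s,x)=\frac14(s+U'(x))^2$. Peierls barrier from any $z\in\mathbb{S}^1$: $h(y;z)=\liminf_{T\to\infty}\inf\{\int_0^TL(\dot\gamma,\gamma)dt:\gamma:[0,T]\to\mathbb{S}^1$ absolutely continuous, $\gamma(0)=z,\gamma(T)=y\}$. Right barrier: for $y\in[x_i,x_{i+k}]$, $h_R(y;x_i)=\inf\{\int_0^TL(\dot\gamma,\gamma)dt:T\ge0,\gamma:[0,T]\to\mathbb{R}$ absolutely continuous, $\gamma(0)=x_i,\gamma(T)=y\}$; left barrier $h_L(y;x_i)$, $y\in[x_{i-k},x_i]$, same formula. For $i,j\in\{1,\dots,k\}$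 ($x_{k+1}=x_1+1$): $\tilde h_R(x_i;x_{j+1})=h_R(x_i;x_{j+1})$ if $j<i$, $=h_R(x_{i+k};x_{j+1})$ if $j\ge i$; $\tilde h_L(x_i;x_j)=h_L(x_i;x_j)$ if $j\ge i$, $=h_L(x_{i-k};x_j)$ if $j<i$. *)

From HB Require Import structures.
From mathcomp Require Import all_boot all_order all_algebra.
From mathcomp Require Import all_classical all_reals all_analysis.
Set Implicit Arguments. Unset Strict Implicit. Unset Printing Implicit Defensive.
Import Order.TTheory GRing.Theory Num.Theory.
Import numFieldNormedType.Exports.
Local Open Scope classical_set_scope.
Local Open Scope ring_scope.

Section Defs.
Variable R : realType.

Definition smooth (U : R -> R) : Prop :=
  forall (n : nat) (x : R), derivable (derive1n n U) x 1.

Definition local_min (U : R -> R) (x : R) : Prop :=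
  exists e : R, 0 < e /\ forall y, `|y - x| < e -> U x <= U y.
Definition local_max (U : R -> R) (x : R) : Prop :=
  exists e : R, 0 < e /\ forall y, `|y - x| < e -> U y <= U x.

Definition lagr (U : R -> R) (s x : R) : R := (s + derive1 U x) ^+ 2 / 4.

Definition abs_cont_on (a b : R) (g : R -> R) : Prop :=
  forall eps : R, 0 < eps -> exists2 delta : R, 0 < delta &
    forall (n : nat) (l r : nat -> R),
      (forall i, (i < n)%N -> a <= l i /\ l i <= r i /\ r i <= b) ->
      (forall i, (i.+1 < n)%N -> r i <= l i.+1) ->
      \sum_(i < n) (r i - l i) < delta ->
      \sum_(i < n) `|g (r i) - g (l i)| < eps.

Definition action (U : R -> R) (T : R) (g : R -> R) : \bar R :=
  (\int[@lebesgue_measure R]_(t in `[0%R, T]) (lagr U (derive1 g t) (g t))%:E)%E.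

(* minimal action in time T between z and y on S^1 = R/Z, curves being
   represented by their (absolutely continuous) lifts to R *)
Definition actT (U : R -> R) (T : R) (y z : R) : \bar R :=
  ereal_inf [set action U T g | g in
     [set g : R -> R | abs_cont_on 0 T g /\ g 0 = z /\
                       exists n : int, g T = y + n%:~R]].

Definition peierls (U : R -> R) (y z : R) : \bar R :=
  ereal_sup [set ereal_inf [set actT U T y z | T in [set T | S <= T]]
            | S in [set: R]].

(* barrier on the line (common formula for h_R and h_L):
   inf over T >= 0 and AC curves g : [0,T] -> R with g 0 = z, g T = y *)
Definition hline (U : R -> R) (y z : R) : \bar R :=
  ereal_inf [set a : \bar R | exists (T : R) (g : R -> R),
     0 <= T /\ abs_cont_on 0 T g /\ g 0 = z /\ g T = y /\ a = action U T g].

Definition hR (U : R -> R) (y z : R) := hline U y z.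
Definition hL (U : R -> R) (y z : R) := hline U y z.

(* tilde h_R(x_i; x_{j+1}) and tilde h_L(x_i; x_j), i j in 1..k,
   xs i = x_i (minima, indexed by int) *)
Definition thR (U : R -> R) (k : nat) (xs : int -> R) (i j : nat) : \bar R :=
  if (j < i)%N then hR U (xs i%:Z) (xs (j.+1)%:Z)
  else hR U (xs (i + k)%:Z) (xs (j.+1)%:Z).
Definition thL (U : R -> R) (k : nat) (xs : int -> R) (i j : nat) : \bar R :=
  if (i <= j)%N then hL U (xs i%:Z) (xs j%:Z)
  else hL U (xs (i%:Z - k%:Z)) (xs j%:Z).

Definition Wi (U : R -> R) (k : nat) (xs : int -> R) (i : nat) : \bar R :=
  \big[Order.min/+oo%E]_(j < k) (thR U k xs i j.+1 + thL U k xs i j.+1)%E.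

Definition Wfun (U : R -> R) (k : nat) (xs : int -> R) (x : R) : \bar R :=
  \big[Order.min/+oo%E]_(j < k) (Wi U k xs j.+1 + peierls U x (xs (j.+1)%:Z))%E.

End Defs.

(* Taking the first alternative for every i gives back W(x), so the right-hand
   side is at most W(x); for the converse it suffices that
   W(x) <= W(x_{i+1/2}) + h(x; x_{i+1/2}), which follows from the triangle
   inequality h(x; z) <= h(y; z) + h(x; y) for the Peierls barrier with
   z = x_j and y = x_{i+1/2}.  That inequality comes from concatenating a curve
   from z to y in time T1 with one from y to x in time T2: the lift of the
   second curve is translated by an integer so that it starts where the first
   ends, which does not change its action because U' is 1-periodic, and the
   action of the concatenation is at most the sum of the two actions. *)

From HB Require Import structures.
From mathcomp Require Import all_boot all_order all_algebra.
From mathcomp Require Import all_classical all_reals all_analysis.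
From mathcomp Require Import measurable_realfun lra.
Import Order.TTheory GRing.Theory Num.Theory.
Import numFieldNormedType.Exports.
Import HBNNSimple.
Set Implicit Arguments.
Unset Strict Implicit.
Unset Printing Implicit Defensive.
Local Open Scope ring_scope.
Local Open Scope classical_set_scope.

Section abs_cont.
Context {R : realType}.
Implicit Types (a b : R) (f g : R -> R).

Lemma abs_cont_on_cst a b c : abs_cont_on a b (fun=> c).
Proof.
move=> eps eps0; exists 1 => // n l r _ _ _.
by rewrite big1 // => i _; rewrite subrr normr0.
Qed.

Lemma abs_cont_onD a b f g :
  abs_cont_on a b f -> abs_cont_on a b g -> abs_cont_on a b (f \+ g).
Proof.
move=> acf acg eps eps0; have eps20 : 0 < eps / 2 by rewrite divr_gt0.
have [df df0 Hf] := acf _ eps20; have [dg dg0 Hg] := acg _ eps20.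
exists (Num.min df dg); first by rewrite lt_min df0 dg0.
move=> n l r lr_in lr_sorted lr_sum.
apply: (@le_lt_trans _ _
  (\sum_(i < n) (`|f (r i) - f (l i)| + `|g (r i) - g (l i)|))).
  by apply: ler_sum => i _; rewrite /= opprD addrACA; exact: ler_normD.
rewrite big_split /= [eps]splitr; apply: ltrD.
- by apply: Hf => //; apply: lt_le_trans lr_sum _; rewrite ge_min lexx.
- by apply: Hg => //; apply: lt_le_trans lr_sum _; rewrite ge_min lexx orbT.
Qed.

Lemma abs_cont_on_comp a b a' b' f phi :
  (forall t, a' <= t <= b' -> a <= phi t <= b) ->
  {homo phi : s t / s <= t} ->
  (forall s t, s <= t -> phi t - phi s <= t - s) ->
  abs_cont_on a b f -> abs_cont_on a' b' (f \o phi).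
Proof.
move=> phi_in phi_nd phi_lip acf eps eps0.
have [d d0 Hf] := acf _ eps0; exists d => // n l r lr_in lr_sorted lr_sum.
apply: (Hf n (phi \o l) (phi \o r)) => [i /lr_in [l0 [lr rb]]|i /lr_sorted|] /=.
- have /andP[al _] : a <= phi (l i) <= b.
    by apply: phi_in; rewrite l0 (le_trans lr rb).
  have /andP[_ rb'] : a <= phi (r i) <= b.
    by apply: phi_in; rewrite rb (le_trans l0 lr).
  by do !split => //; exact: phi_nd.
- exact: phi_nd.
- apply: le_lt_trans lr_sum; apply: ler_sum => i _; apply: phi_lip.
  by have [_ []] := lr_in i (ltn_ord i).
Qed.

End abs_cont.

Section derive1_translate.
Context {R : realType}.
Implicit Types (f g : R -> R).

Lemma near_eq_derive1 f g t :
  (\forall s \near t, f s = g s) -> derive1 f t = derive1 g t.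
Proof. by move=> fg; rewrite !derive1E; exact: near_eq_derive. Qed.

(* No differentiability is needed: the two difference quotients coincide. *)
Lemma derive1_translate f a c t :
  derive1 (fun s => f (s + a) + c) t = derive1 f (t + a).
Proof.
rewrite /derive1.
by under eq_fun => h do rewrite -[h + t + a]addrA opprD addrACA subrr addr0.
Qed.

Lemma derive1_skew_periodic (U : R -> R) (b : R) :
  (forall x, U (x + 1) = U x - b) ->
  forall x (n : int), derive1 U (x + n%:~R) = derive1 U x.
Proof.
move=> U_skew.
have U'_1 x : derive1 U (x + 1) = derive1 U x.
  rewrite -(derive1_translate U 1 0) -[in RHS](addr0 x).
  rewrite -(derive1_translate U 0 (- b)).
  by congr derive1; apply/funext => s; rewrite U_skew !addr0.
have U'_nat x (m : nat) : derive1 U (x + m%:R) = derive1 U x.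
  by elim: m x => [|m IHm] x; rewrite ?addr0 // -addn1 natrD addrA U'_1 IHm.
move=> x [m|m]; first by rewrite -pmulrn U'_nat.
by rewrite NegzE mulrNz -pmulrn -[in RHS](subrK m.+1%:R x) U'_nat.
Qed.

End derive1_translate.

Section path_cat.
Context {R : realType}.
Implicit Types (g : R -> R) (t : R).

Lemma min_subr_le (c s t : R) : s <= t -> Num.min t c - Num.min s c <= t - s.
Proof.
by move=> st; have [sc|cs] := leP s c; have [tc|ct] := leP t c; lra.
Qed.

(* [g1] up to time [T1], then [g2] translated to start at [g1 T1]; written with
   [min] so that absolute continuity follows from sums and compositions. *)
Definition path_cat g1 g2 T1 t : R :=
  g1 (Num.min t T1) + (g2 (t - Num.min t T1) - g2 0).

Lemma path_cat_l g1 g2 T1 t : t <= T1 -> path_cat g1 g2 T1 t = g1 t.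
Proof. by move=> tT1; rewrite /path_cat min_l // !subrr addr0. Qed.

Lemma path_cat_r g1 g2 T1 t :
  T1 <= t -> path_cat g1 g2 T1 t = g2 (t - T1) + (g1 T1 - g2 0).
Proof. by move=> T1t; rewrite /path_cat min_r // addrCA addrA. Qed.

Lemma abs_cont_on_path_cat g1 g2 T1 T2 : 0 <= T1 -> 0 <= T2 ->
  abs_cont_on 0 T1 g1 -> abs_cont_on 0 T2 g2 ->
  abs_cont_on 0 (T1 + T2) (path_cat g1 g2 T1).
Proof.
move=> T1_ge0 T2_ge0 ac1 ac2.
have -> : path_cat g1 g2 T1 = (g1 \o Num.min ^~ T1) \+
    ((g2 \o fun t => t - Num.min t T1) \+ fun=> - g2 0).
  by apply/funext => t; rewrite /path_cat /= addrA.
apply: abs_cont_onD; last apply: abs_cont_onD; last exact: abs_cont_on_cst.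
- apply: abs_cont_on_comp ac1 => [t /andP[t0 _]|s t st|s t st].
  + by rewrite le_min t0 T1_ge0 ge_min lexx orbT.
  + exact: le_min2.
  + exact: min_subr_le.
- apply: abs_cont_on_comp ac2 => [t /andP[_ tT]|s t st|s t st].
  + rewrite subr_ge0 ge_min lexx /=.
    by have [tT1|T1t] := leP t T1; lra.
  + by have := min_subr_le T1 st; lra.
  + by have := le_min2 st (lexx T1); lra.
Qed.

Lemma derive1_path_cat_lt g1 g2 T1 t :
  t < T1 -> derive1 (path_cat g1 g2 T1) t = derive1 g1 t.
Proof.
move=> tT1; apply: near_eq_derive1.
by apply: filterS (lt_nbhsl tT1) => s sT1; rewrite path_cat_l ?ltW.
Qed.

Lemma derive1_path_cat_gt g1 g2 T1 t :
  T1 < t -> derive1 (path_cat g1 g2 T1) t = derive1 g2 (t - T1).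
Proof.
move=> T1t; rewrite -(derive1_translate g2 (- T1) (g1 T1 - g2 0)).
apply: near_eq_derive1.
by apply: filterS (lt_nbhsr T1t) => s T1s; rewrite path_cat_r ?ltW.
Qed.

End path_cat.

Lemma measurable_addr {R : realType} (a : R) :
  measurable_fun [set: measurableTypeR R] (fun s : R => s + a).
Proof.
apply: continuous_measurable_fun => x.
by apply: cvgD; [exact: cvg_id | exact: cvg_cst].
Qed.

Section shift_nnsfun.
Context {R : realType} (h : {nnsfun measurableTypeR R >-> R}) (a : R).

Definition shift_fun : measurableTypeR R -> R := fun s => h (s + a).

Lemma measurable_shift_fun : measurable_fun setT shift_fun.
Proof.
apply: (measurableT_comp (f := h) (g := fun s : measurableTypeR R => s + a)).
  exact: measurable_funPT.
exact: measurable_addr.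
Qed.

HB.instance Definition _ :=
  isMeasurableFun.Build _ _ _ _ shift_fun measurable_shift_fun.

Lemma finite_range_shift_fun : finite_set (range shift_fun).
Proof.
by apply: sub_finite_set (fimfunP h) => _ [x _ <-]; exists (x + a).
Qed.

HB.instance Definition _ :=
  FiniteImage.Build _ _ shift_fun finite_range_shift_fun.

Lemma shift_fun_ge0 x : 0 <= shift_fun x.
Proof. exact: fun_ge0. Qed.

HB.instance Definition _ := isNonNegFun.Build _ _ shift_fun shift_fun_ge0.

Definition shift_nnsfun : {nnsfun measurableTypeR R >-> R} := shift_fun.

End shift_nnsfun.

Section lebesgue_sintegral.
Context {R : realType}.
Local Notation mu := (@lebesgue_measure R).

Lemma lebesgue_measure_shift (a : R) (B : set R) :
  measurable B -> mu [set s | B (s + a)] = mu B.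
Proof.
move=> mB.
have := @lebesgue_measure_unique R (pushforward mu
  (fun s : measurableTypeR R => (s + a : measurableTypeR R))).
move=> /(_ (measurable_addr a)) mu_shift; rewrite [RHS]mu_shift //.
move=> _ [[x y] _ <-] /=.
transitivity (mu `](x - a), (y - a)]).
  rewrite !lebesgue_measure_itv /= !lte_fin ltrD2r.
  by case: ifP => // _; rewrite -!EFinD opprB addrA subrK.
by congr mu; apply/seteqP; split => s; rewrite /= !in_itv /= ltrBlDr lerBrDr.
Qed.

Lemma sintegral_shift (h : {nnsfun measurableTypeR R >-> R}) (a : R) :
  sintegral mu (shift_nnsfun h a) = sintegral mu h.
Proof.
rewrite !sintegralET; apply: eq_fsbigr => x _; congr (_ * _)%E.
rewrite -[RHS](lebesgue_measure_shift a) //.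
by apply: (measurable_funPTI h); exact: measurable_set1.
Qed.

Lemma sintegral_proj_set1 (h : {nnsfun measurableTypeR R >-> R}) (b : R) :
  sintegral mu (proj_nnsfun h (measurable_set1 b)) = 0%E.
Proof. by rewrite -mrestrict -integral_nnsfun ?integral_set1. Qed.

Lemma sintegral_itv_split (h : {nnsfun measurableTypeR R >-> R}) (a b c : R) :
  (forall x, ~~ (a <= x <= c) -> h x = 0) ->
  sintegral mu h = (sintegral mu (proj_nnsfun h (measurable_itv `[a, b[%R)) +
                    sintegral mu (proj_nnsfun h (measurable_itv `]b, c]%R)))%E.
Proof.
move=> h_out; rewrite -[RHS]adde0 -(sintegral_proj_set1 h b) -!sintegralD.
apply: eq_sintegral => x /=; rewrite !mindicE !mem_setE !in_itv /= in_set1.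
have [/andP[ax xc]|xI] := boolP (a <= x <= c); last first.
  by rewrite h_out // !mul0r !addr0.
rewrite ax xc /=.
by case: ltgtP => [xb|bx|->]; rewrite /= ?mulr1 ?mulr0 ?addr0 ?add0r.
Qed.

End lebesgue_sintegral.

Lemma sintegral_le_ge0_integral d (T : measurableType d) (R : realType)
    (mu : {measure set T -> \bar R}) (D : set T) (f : T -> R)
    (h : {nnsfun T >-> R}) :
  (forall x, 0 <= f x) -> (forall x, D x -> h x <= f x) ->
  (forall x, ~ D x -> h x = 0) ->
  (sintegral mu h <= \int[mu]_(x in D) (f x)%:E)%E.
Proof.
move=> f_ge0 h_le_f h_out.
rewrite ge0_integralE => [|x _]; last by rewrite lee_fin.
apply: ereal_sup_ubound; exists h => // x /=; rewrite patchE.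
case: ifPn => [/set_mem/h_le_f|/negP xD]; rewrite lee_fin //.
by rewrite h_out // => Dx; apply: xD; exact: mem_set.
Qed.

Section integral_concat.
Context {R : realType}.
Local Notation mu := (@lebesgue_measure R).

Lemma ge0_integral_concat_le (f f1 f2 : R -> R) (T1 T2 : R) :
  0 <= T1 -> 0 <= T2 ->
  (forall t, 0 <= f t) -> (forall t, 0 <= f1 t) -> (forall t, 0 <= f2 t) ->
  (forall t, 0 <= t < T1 -> f t = f1 t) ->
  (forall t, T1 < t <= T1 + T2 -> f t = f2 (t - T1)) ->
  (\int[mu]_(t in `[0%R, (T1 + T2)%R]) (f t)%:E <=
   \int[mu]_(t in `[0%R, T1]) (f1 t)%:E +
   \int[mu]_(t in `[0%R, T2]) (f2 t)%:E)%E.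
Proof.
move=> T1_ge0 T2_ge0 f_ge0 f1_ge0 f2_ge0 f_f1 f_f2.
rewrite ge0_integralE => [|t _]; last by rewrite lee_fin.
(* The integrands need not be measurable, so we bound each simple function
   below [f] rather than use additivity of the integral. *)
apply: ge_ereal_sup => _ [h /= h_le <-].
have h_le_f t : 0 <= t <= T1 + T2 -> h t <= f t.
  by move=> tI; have := h_le t; rewrite patchE mem_setE in_itv /= tI lee_fin.
have h_out t : ~~ (0 <= t <= T1 + T2) -> h t = 0.
  move=> tI; apply/eqP; rewrite eq_le fun_ge0 andbT.
  by have := h_le t; rewrite patchE mem_setE in_itv /= (negbTE tI) lee_fin.
rewrite (sintegral_itv_split T1 h_out); apply: leeD.
- apply: sintegral_le_ge0_integral => // t;
    rewrite /= mindicE mem_setE !in_itv /=;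
    case: (boolP (0 <= t < T1)) => [/andP[t0 tT1]|_]; rewrite ?mulr0 ?mulr1 //.
  + move=> _; rewrite -f_f1 ?t0 //; apply: h_le_f.
    by rewrite t0 (le_trans (ltW tT1)) // lerDl.
  + by move=> []; rewrite t0 ltW.
- rewrite -(sintegral_shift _ T1).
  apply: sintegral_le_ge0_integral => // t;
    rewrite /= mindicE mem_setE !in_itv /=;
    case: (boolP (T1 < t + T1 <= T1 + T2)) => [/andP[tT1 tT]|_];
    rewrite ?mulr0 ?mulr1 //.
  + move=> _; have -> : f2 t = f (t + T1) by rewrite f_f2 ?tT1 ?tT // addrK.
    by rewrite h_le_f // tT andbT (le_trans T1_ge0 (ltW tT1)).
  + by move=> []; apply/andP; split; lra.
Qed.

End integral_concat.


Lemma le_ereal_infD {R : realType} (B C : set (\bar R)) (a : \bar R) :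
  (forall b, B b -> 0 <= b)%E -> (forall c, C c -> 0 <= c)%E ->
  (forall b c, B b -> C c -> a <= b + c)%E ->
  (a <= ereal_inf B + ereal_inf C)%E.
Proof.
move=> B_ge0 C_ge0 aBC.
have infB_ge0 : (0 <= ereal_inf B)%E by exact: le_ereal_inf_tmp.
have infC_ge0 : (0 <= ereal_inf C)%E by exact: le_ereal_inf_tmp.
case EB: (ereal_inf B) infB_ge0 => [rb| |] // _; last first.
  by rewrite addye ?leey // gt_eqF // (lt_le_trans _ infC_ge0) // ltNy0.
case EC: (ereal_inf C) infC_ge0 => [rc| |] // _; last by rewrite addey ?leey.
apply/lee_addgt0Pr => e e0; have e20 : 0 < e / 2 by rewrite divr_gt0.
have infB_fin : ereal_inf B \is a fin_num by rewrite EB.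
have infC_fin : ereal_inf C \is a fin_num by rewrite EC.
have [b Bb hb] := lb_ereal_inf_adherent e20 infB_fin.
have [c Cc hc] := lb_ereal_inf_adherent e20 infC_fin.
rewrite EB in hb; rewrite EC in hc.
apply: le_trans (aBC _ _ Bb Cc) _; apply: le_trans (leeD (ltW hb) (ltW hc)) _.
by rewrite -!EFinD lee_fin; lra.
Qed.

Section barriers.
Context {R : realType} (U : R -> R) (b : R).
Hypothesis U_skew : forall x, U (x + 1) = U x - b.
Local Open Scope ereal_scope.

Lemma lagr_ge0 s x : (0 <= lagr U s x)%R.
Proof. by rewrite /lagr divr_ge0 // sqr_ge0. Qed.

Lemma action_ge0 T g : 0 <= action U T g.
Proof. by apply: integral_ge0 => t _; rewrite lee_fin lagr_ge0. Qed.

Lemma actT_ge0 T y z : 0 <= actT U T y z.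
Proof. by apply: le_ereal_inf_tmp => _ [g _ <-]; exact: action_ge0. Qed.

Lemma peierls_ge0 y z : 0 <= peierls U y z.
Proof.
apply: le_ereal_sup_tmp.
exists (ereal_inf [set actT U T y z | T in [set T | (0 <= T)%R]]).
  by exists 0%R.
by apply: le_ereal_inf_tmp => _ [T _ <-]; exact: actT_ge0.
Qed.

Lemma action_path_cat_le g1 g2 T1 T2 (n : int) : (0 <= T1)%R -> (0 <= T2)%R ->
  (g1 T1 - g2 0)%R = n%:~R ->
  action U (T1 + T2) (path_cat g1 g2 T1) <= action U T1 g1 + action U T2 g2.
Proof.
move=> T1_ge0 T2_ge0 glue.
apply: ge0_integral_concat_le => // [t|t|t|t /andP[_ tT1]|t /andP[T1t _]];
  rewrite ?lagr_ge0 //.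
  by rewrite path_cat_l ?ltW // derive1_path_cat_lt.
rewrite path_cat_r ?ltW // derive1_path_cat_gt // glue.
by rewrite /lagr (derive1_skew_periodic U_skew).
Qed.

Lemma actT_triangle T1 T2 x y z : (0 <= T1)%R -> (0 <= T2)%R ->
  actT U (T1 + T2) x z <= actT U T1 y z + actT U T2 x y.
Proof.
move=> T1_ge0 T2_ge0.
apply: le_ereal_infD => [_ [g _ <-]|_ [g _ <-]|]; rewrite ?action_ge0 //.
move=> _ _ [g1 [ac1 [g1_0 [n1 g1_T1]]] <-] [g2 [ac2 [g2_0 [n2 g2_T2]]] <-].
have glue : (g1 T1 - g2 0)%R = n1%:~R by rewrite g1_T1 g2_0 addrC addKr.
apply: le_trans (action_path_cat_le T1_ge0 T2_ge0 glue).
apply: ereal_inf_lbound; exists (path_cat g1 g2 T1) => //.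
split; first exact: abs_cont_on_path_cat.
split; first by rewrite path_cat_l.
exists (n2 + n1)%R; rewrite path_cat_r ?lerDl // glue.
by rewrite [(T1 + T2)%R]addrC addrK g2_T2 intrD addrA.
Qed.

Lemma peierls_triangle x y z : peierls U x z <= peierls U y z + peierls U x y.
Proof.
apply: ge_ereal_sup => _ [S _ <-].
pose S' := Num.max S 0%R.
have S'_ge0 : (0 <= S')%R by rewrite le_max lexx orbT.
apply: (@le_trans _ _
    (ereal_inf [set actT U T y z | T in [set T | (S' <= T)%R]] +
     ereal_inf [set actT U T x y | T in [set T | (0 <= T)%R]])).
  apply: le_ereal_infD => [_ [T _ <-]|_ [T _ <-]|]; rewrite ?actT_ge0 //.
  move=> _ _ [T1 /= S'T1 <-] [T2 /= T2_ge0 <-].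
  have T1_ge0 : (0 <= T1)%R by exact: le_trans S'T1.
  apply: le_trans (actT_triangle x y z T1_ge0 T2_ge0); apply: ereal_inf_lbound.
  exists (T1 + T2)%R => //=.
  have S_S' : (S <= S')%R by rewrite le_max lexx.
  by rewrite (le_trans S_S') // (le_trans S'T1) // lerDl.
by apply: leeD; apply: ereal_sup_ubound; [exists S' | exists 0%R].
Qed.

End barriers.

Lemma le_bigmin_addr {R : realType} (k : nat) (F : 'I_k -> \bar R)
    (a p : \bar R) :
  (0 <= p)%E -> (forall i, a <= F i + p)%E ->
  (a <= \big[Order.min/+oo%E]_(i < k) F i + p)%E.
Proof.
move=> p_ge0 aF; apply: (big_ind (fun v => a <= v + p)%E) => //.
  by rewrite addye ?leey // gt_eqF // (lt_le_trans _ p_ge0) // ltNy0.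
by move=> u v au av; case: (leP u v).
Qed.

Lemma Wfun_le (R : realType) (U : R -> R) (k : nat) (xs : int -> R) (x : R)
    (j : 'I_k) :
  (Wfun U k xs x <= Wi U k xs j.+1 + peierls U x (xs j.+1))%E.
Proof. exact: bigmin_le. Qed.

Theorem lemma4p4 (R : realType) (U : R -> R) (k : nat) (xs xh : int -> R) :
  (0 < k)%N ->
  smooth U ->
  (exists bbar : R, forall x : R, U (x + 1) = U x - bbar) ->
  (forall i : int, xs (i + k%:Z) = xs i + 1) ->
  (forall i : int, xh (i + k%:Z) = xh i + 1) ->
  xh 0 = 0 ->
  (forall i : int, xh (i - 1) < xs i /\ xs i < xh i) ->
  (forall x : R, derive1 U x = 0 <-> exists i : int, x = xs i \/ x = xh i) ->
  (forall i : int, local_min U (xs i)) ->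
  (forall i : int, local_max U (xh i)) ->
  forall x : R,
    Wfun U k xs x =
    \big[Order.min/+oo%E]_(i < k)
      Order.min (Wi U k xs i.+1 + peierls U x (xs (i.+1)%:Z))%E
                (Wfun U k xs (xh (i.+1)%:Z) + peierls U x (xh (i.+1)%:Z))%E.
Proof.
move=> _ _ [b U_skew] _ _ _ _ _ _ _ x.
apply/eqP; rewrite eq_le; apply/andP; split.
  apply: le_bigmin => [|i _]; first exact: leey.
  rewrite le_min Wfun_le /= le_bigmin_addr // => [|j]; first exact: peierls_ge0.
  rewrite (le_trans (Wfun_le U xs x j)) // -addeA leeD //.
  exact: peierls_triangle U_skew _ _ _.
by apply: le_bigmin2 => i _; rewrite ge_min lexx.
Qed.
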